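(* Let $L$ be a countable C-lattice domain in which every element is a join of principal elements. If $L$ is sharp, then $L$ is a Dedekind lattice, i.e. every element of $L$ is principal.
   Context: A multiplicative lattice is a complete lattice $(L,\le)$ with bottom $0$ and top $1$ which is also a commutative monoid with identity $1$ such that $a(\bigvee_\alpha b_\alpha)=\bigvee_\alpha(ab_\alpha)$ for all $a,b_\alpha\in L$. For $x,y\in L$, $(y:x)=\bigvee\{a\in L: ax\le y\}$. An element $c$ is compact if $c\le\bigvee S$ implies $c\le\bigvee T$ for some finite $T\subseteq S$. A C-lattice is a multiplicative lattice in which $1$ is compact, the product of two compact elements is compact, and every element is a join of compact elements. A proper element $p\ne1$ is prime if $xy\le p$ implies $x\le p$ or $y\le p$; $L$ is a domain if $0$ is prime. An element $x$ is principal if $y\wedge zx=((y:x)\wedge z)x$ and $y\vee(z:x)=((yx\vee z):x)$ for all $y,z\in L$. $L$ is sharp if whenever $a_1a_2\le b$ with $a_1,a_2,b\in L$, there exist $b_1,b_2\in L$ with $a_i\le b_i$ ($i=1,2$) and $b=b_1b_2$. *)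

From Stdlib Require Import List.

Record MultLattice := {
  car :> Type;
  le : car -> car -> Prop;
  bigjoin : (car -> Prop) -> car;
  mul : car -> car -> car;
  one : car;
  le_refl : forall x, le x x;
  le_trans : forall x y z, le x y -> le y z -> le x z;
  le_antisym : forall x y, le x y -> le y x -> x = y;
  bigjoin_ub : forall (S : car -> Prop) x, S x -> le x (bigjoin S);
  bigjoin_least : forall (S : car -> Prop) u,
      (forall x, S x -> le x u) -> le (bigjoin S) u;
  one_top : forall x, le x one;
  mulC : forall x y, mul x y = mul y x;
  mulA : forall x y z, mul x (mul y z) = mul (mul x y) z;
  mul1 : forall x, mul x one = x;
  mul_bigjoin : forall a (S : car -> Prop),
      mul a (bigjoin S) = bigjoin (fun y => exists b, S b /\ y = mul a b)
}.

Arguments le {L} : rename.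
Arguments bigjoin {L} : rename.
Arguments mul {L} : rename.
Arguments one {L} : rename.

Section Defs.
Variable L : MultLattice.

Definition zero : L := bigjoin (fun _ => False).
Definition join (x y : L) : L := bigjoin (fun z => z = x \/ z = y).
Definition meet (x y : L) : L := bigjoin (fun a => le a x /\ le a y).
Definition colon (y x : L) : L := bigjoin (fun a => le (mul a x) y).

Definition compact (c : L) : Prop :=
  forall S : L -> Prop, le c (bigjoin S) ->
    exists T : list L, (forall t, In t T -> S t) /\ le c (bigjoin (fun t => In t T)).

Definition is_C_lattice : Prop :=
  compact one /\
  (forall a b, compact a -> compact b -> compact (mul a b)) /\
  (forall x : L, exists S : L -> Prop,
      (forall c, S c -> compact c) /\ x = bigjoin S).

Definition prime (p : L) : Prop :=
  p <> one /\ forall x y, le (mul x y) p -> le x p \/ le y p.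

Definition is_domain : Prop := prime zero.

Definition principal (x : L) : Prop :=
  forall y z : L,
    meet y (mul z x) = mul (meet (colon y x) z) x /\
    join y (colon z x) = colon (join (mul y x) z) x.

Definition sharp : Prop :=
  forall a1 a2 b : L, le (mul a1 a2) b ->
    exists b1 b2, le a1 b1 /\ le a2 b2 /\ b = mul b1 b2.

Definition countable_lattice : Prop :=
  exists f : L -> nat, forall x y, f x = f y -> x = y.

Definition principally_generated : Prop :=
  forall x : L, exists S : L -> Prop,
    (forall p, S p -> principal p) /\ x = bigjoin S.

Definition dedekind_lattice : Prop := forall x : L, principal x.

End Defs.

(* Suppose x is not principal and pick a nonzero principal element below it.  Sharpness
   yields a least principal element b above x, and x = c b where c lies in no proper
   principal element; the same device shows that joins of principal elements are
   principal.  Countability and compactness of 1 put c below a maximal element m, which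
   again lies in no proper principal element.

   Every principal w <= m lies below m^2.  Otherwise, enumerating the principal elements
   below m gives a strictly increasing principal chain s_n starting at w and exhausting m;
   the wedges (w : s_n) /\ s_(n+1) multiply pairwise into w but none lies below w.
   Sharpness applied to the joins of the even and of the odd wedges writes w = B C with B
   above the even and C above the odd wedges.  One factor, say C, is not below m, so
   C \/ m = 1, and compactness of 1 gives 1 <= C \/ s_N; then every even wedge P_k with
   k >= N satisfies P_k <= P_k (C \/ s_N) <= B C \/ (w : s_k) s_k <= w, a contradiction.

   Hence m <= m^2, and every nonzero principal u <= m factors into principal elements
   below m.  Factoring repeatedly along a binary sequence produces continuum many
   distinct joins, contradicting countability. *)

From Stdlib Require Import List Classical ClassicalEpsilon FunctionalExtensionality Lia.

Local Infix "⊑" := le (at level 70).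
Local Infix "⋅" := mul (at level 40, left associativity).
Local Notation "x ⊔ y" := (join _ x y) (at level 50, left associativity).
Local Notation "x ⊓ y" := (meet _ x y) (at level 45, left associativity).
Local Notation "y ÷ x" := (colon _ y x) (at level 40, left associativity).

Definition list_join {L : MultLattice} (T : list L) : L := bigjoin (fun t => In t T).

Definition seq_join {L : MultLattice} (s : nat -> L) : L := bigjoin (fun z => exists n, z = s n).

Definition not_in_proper_principal {L : MultLattice} (c : L) : Prop :=
  forall z, principal L z -> c ⊑ z -> z = one.

Definition maximal {L : MultLattice} (m : L) : Prop :=
  m <> one /\ forall e, m ⊑ e -> e <> one -> e = m.

Definition principal_below {L : MultLattice} (m u : L) : Prop := principal L u /\ u ⊑ m.

Definition nonzero_principal_below {L : MultLattice} (m u : L) : Prop :=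
  principal L u /\ u <> zero L /\ u ⊑ m.

Section Lattice.
Context {L : MultLattice}.
Implicit Types a b c u v x y z : L.

Lemma zero_le x : zero L ⊑ x.
Proof. apply bigjoin_least. intros _ []. Qed.

Lemma le_zero x : x ⊑ zero L -> x = zero L.
Proof. intros H. apply le_antisym; [exact H | apply zero_le]. Qed.

Lemma neq_zero_le x y : x ⊑ y -> x <> zero L -> y <> zero L.
Proof. intros Hxy Hx ->. apply Hx, le_zero, Hxy. Qed.

Lemma join_l x y : x ⊑ x ⊔ y.
Proof. apply bigjoin_ub. left; reflexivity. Qed.

Lemma join_r x y : y ⊑ x ⊔ y.
Proof. apply bigjoin_ub. right; reflexivity. Qed.

Lemma join_lub x y z : x ⊑ z -> y ⊑ z -> x ⊔ y ⊑ z.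
Proof. intros Hx Hy. apply bigjoin_least. intros t [-> | ->]; assumption. Qed.

Lemma join_mono x y x' y' : x ⊑ x' -> y ⊑ y' -> x ⊔ y ⊑ x' ⊔ y'.
Proof.
  intros Hx Hy. apply join_lub.
  - apply le_trans with x'; [exact Hx | apply join_l].
  - apply le_trans with y'; [exact Hy | apply join_r].
Qed.

Lemma join_eq_r x y : x ⊑ y -> x ⊔ y = y.
Proof. intros H. apply le_antisym; [apply join_lub; [exact H | apply le_refl] | apply join_r]. Qed.

Lemma join_comm x y : x ⊔ y = y ⊔ x.
Proof. apply le_antisym; apply join_lub; auto using join_l, join_r. Qed.

Lemma join_zero_l x : zero L ⊔ x = x.
Proof. apply join_eq_r, zero_le. Qed.

Lemma join_zero_r x : x ⊔ zero L = x.
Proof. rewrite join_comm. apply join_zero_l. Qed.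

Lemma meet_l x y : x ⊓ y ⊑ x.
Proof. apply bigjoin_least. intros a [Ha _]; exact Ha. Qed.

Lemma meet_r x y : x ⊓ y ⊑ y.
Proof. apply bigjoin_least. intros a [_ Ha]; exact Ha. Qed.

Lemma meet_glb x y z : z ⊑ x -> z ⊑ y -> z ⊑ x ⊓ y.
Proof. intros Hx Hy. apply bigjoin_ub. split; assumption. Qed.

Lemma meet_mono x y x' y' : x ⊑ x' -> y ⊑ y' -> x ⊓ y ⊑ x' ⊓ y'.
Proof.
  intros Hx Hy. apply meet_glb.
  - apply le_trans with x; [apply meet_l | exact Hx].
  - apply le_trans with y; [apply meet_r | exact Hy].
Qed.

Lemma meet_eq_l x y : x ⊑ y -> x ⊓ y = x.
Proof. intros H. apply le_antisym; [apply meet_l | apply meet_glb; [apply le_refl | exact H]]. Qed.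

Lemma chain_le (s : nat -> L) : (forall n, s n ⊑ s (S n)) -> forall n k, n <= k -> s n ⊑ s k.
Proof. intros Hs n k Hnk. induction Hnk as [| k _ IH]; [apply le_refl | exact (le_trans _ _ _ _ IH (Hs k))]. Qed.

Lemma mul1l x : one ⋅ x = x.
Proof. rewrite mulC. apply mul1. Qed.

Lemma mul_join_r a x y : a ⋅ (x ⊔ y) = a ⋅ x ⊔ a ⋅ y.
Proof.
  unfold join. rewrite mul_bigjoin. apply le_antisym; apply bigjoin_least.
  - intros t [b [[-> | ->] ->]]; apply bigjoin_ub; auto.
  - intros t [-> | ->]; apply bigjoin_ub; eauto.
Qed.

Lemma mul_join_l x y a : (x ⊔ y) ⋅ a = x ⋅ a ⊔ y ⋅ a.
Proof. rewrite mulC, mul_join_r, (mulC _ a x), (mulC _ a y). reflexivity. Qed.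

Lemma mul_mono_r a x y : x ⊑ y -> a ⋅ x ⊑ a ⋅ y.
Proof. intros H. rewrite <- (join_eq_r x y H), mul_join_r. apply join_l. Qed.

Lemma mul_mono_l a x y : x ⊑ y -> x ⋅ a ⊑ y ⋅ a.
Proof. intros H. rewrite (mulC _ x), (mulC _ y). apply mul_mono_r, H. Qed.

Lemma mul_mono x y x' y' : x ⊑ x' -> y ⊑ y' -> x ⋅ y ⊑ x' ⋅ y'.
Proof. intros Hx Hy. apply le_trans with (x' ⋅ y); [apply mul_mono_l, Hx | apply mul_mono_r, Hy]. Qed.

Lemma mul_le_l x y : x ⋅ y ⊑ x.
Proof. rewrite <- (mul1 _ x) at 2. apply mul_mono_r, one_top. Qed.

Lemma mul_le_r x y : x ⋅ y ⊑ y.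
Proof. rewrite mulC. apply mul_le_l. Qed.

Lemma mul_zero_l x : zero L ⋅ x = zero L.
Proof. apply le_zero, mul_le_l. Qed.

Lemma mul_zero_r x : x ⋅ zero L = zero L.
Proof. apply le_zero, mul_le_r. Qed.

Lemma nonzero_factor_l a b : a ⋅ b <> zero L -> a <> zero L.
Proof. intros H ->. apply H, mul_zero_l. Qed.

Lemma nonzero_factor_r a b : a ⋅ b <> zero L -> b <> zero L.
Proof. intros H ->. apply H, mul_zero_r. Qed.

Lemma mul_bigjoin_le (S1 S2 : L -> Prop) :
  bigjoin S1 ⋅ bigjoin S2 ⊑ bigjoin (fun z => exists p q, S1 p /\ S2 q /\ z = p ⋅ q).
Proof.
  rewrite mul_bigjoin. apply bigjoin_least. intros z [q [Hq ->]].
  rewrite mulC, mul_bigjoin. apply bigjoin_least. intros z [p [Hp ->]].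
  apply bigjoin_ub. exists p, q. rewrite mulC. auto.
Qed.

Lemma le_colon a x y : a ⋅ x ⊑ y -> a ⊑ y ÷ x.
Proof. intros H. apply bigjoin_ub, H. Qed.

Lemma colon_mul_le x y : (y ÷ x) ⋅ x ⊑ y.
Proof.
  unfold colon. rewrite mulC, mul_bigjoin. apply bigjoin_least.
  intros z [a [Ha ->]]. rewrite mulC. exact Ha.
Qed.

Lemma colon_mono x y y' : y ⊑ y' -> y ÷ x ⊑ y' ÷ x.
Proof. intros H. apply le_colon. apply le_trans with y; [apply colon_mul_le | exact H]. Qed.

Lemma colon_anti x x' y : x ⊑ x' -> y ÷ x' ⊑ y ÷ x.
Proof. intros H. apply le_colon. apply le_trans with ((y ÷ x') ⋅ x'); [apply mul_mono_r, H | apply colon_mul_le]. Qed.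

Lemma le_colon_self x y : y ⊑ y ÷ x.
Proof. apply le_colon, mul_le_l. Qed.

Lemma colon_top x y : x ⊑ y -> y ÷ x = one.
Proof. intros H. apply le_antisym; [apply one_top | apply le_colon; rewrite mul1l; exact H]. Qed.

Lemma colon_colon x w y : y ÷ w ÷ x = y ÷ (x ⋅ w).
Proof.
  apply le_antisym; apply le_colon.
  - rewrite mulA. apply le_trans with ((y ÷ w) ⋅ w); [apply mul_mono_l, colon_mul_le | apply colon_mul_le].
  - apply le_colon. rewrite <- mulA. apply colon_mul_le.
Qed.

End Lattice.

Section Principal.
Context {L : MultLattice}.
Implicit Types a b c p q u v w x y z : L.

Lemma principal_one : principal L one.
Proof.
  assert (Hcolon1 : forall y, y ÷ one = y).
  { intros y. apply le_antisym.
    - rewrite <- (mul1 _ (y ÷ one)). apply colon_mul_le.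
    - apply le_colon. rewrite mul1. apply le_refl. }
  intros y z. rewrite !mul1, !Hcolon1. split; reflexivity.
Qed.

Lemma principal_zero : principal L (zero L).
Proof.
  intros y z. rewrite !mul_zero_r. split.
  - apply le_antisym; [apply meet_r | apply zero_le].
  - rewrite !colon_top by apply zero_le. apply le_antisym; [apply one_top | apply join_r].
Qed.

Lemma principal_mul x w : principal L x -> principal L w -> principal L (x ⋅ w).
Proof.
  intros Hx Hw y z. split.
  - rewrite mulA. destruct (Hw y (z ⋅ x)) as [-> _]. destruct (Hx (y ÷ w) z) as [-> _].
    rewrite colon_colon, mulA. reflexivity.
  - rewrite <- !colon_colon. destruct (Hx y (z ÷ w)) as [_ ->]. destruct (Hw (y ⋅ x) z) as [_ ->].
    rewrite mulA. reflexivity.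
Qed.

Lemma principal_below_zero m : principal_below m (zero L).
Proof. split; [apply principal_zero | apply zero_le]. Qed.

Lemma meet_principal x y : principal L x -> y ⊓ x = (y ÷ x) ⋅ x.
Proof.
  intros Hx. destruct (Hx y one) as [H _]. rewrite mul1l in H. rewrite H.
  f_equal. apply meet_eq_l, one_top.
Qed.

Lemma mul_colon_principal x a : principal L x -> a ⊑ x -> (a ÷ x) ⋅ x = a.
Proof. intros Hx Ha. rewrite <- meet_principal by exact Hx. apply meet_eq_l, Ha. Qed.

Lemma colon_mul_join x y z : principal L x -> (y ⋅ x ⊔ z) ÷ x = y ⊔ (z ÷ x).
Proof. intros Hx. symmetry. apply Hx. Qed.

Section Domain.
Hypothesis Hdom : is_domain L.

Lemma one_neq_zero : one <> zero L.
Proof. destruct Hdom as [H _]. intros E. apply H. symmetry. exact E. Qed.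

Lemma mul_eq_zero a b : a ⋅ b = zero L -> a = zero L \/ b = zero L.
Proof.
  intros H. destruct Hdom as [_ Hprime].
  destruct (Hprime a b) as [Ha | Hb]; [rewrite H; apply le_refl | left | right]; apply le_zero; assumption.
Qed.

Lemma mul_neq_zero a b : a <> zero L -> b <> zero L -> a ⋅ b <> zero L.
Proof. intros Ha Hb E. destruct (mul_eq_zero a b E); contradiction. Qed.

Lemma colon_zero x : x <> zero L -> zero L ÷ x = zero L.
Proof.
  intros Hx. apply le_zero. apply bigjoin_least. intros t Ht.
  destruct (mul_eq_zero t x (le_zero _ Ht)) as [-> | ->]; [apply le_refl | contradiction].
Qed.

Lemma mul_cancel_le x a b : principal L x -> x <> zero L -> a ⋅ x ⊑ b ⋅ x -> a ⊑ b.
Proof.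
  intros Hx Hx0 H. pose proof (colon_mul_join x b (zero L) Hx) as E.
  rewrite join_zero_r, colon_zero, join_zero_r in E by exact Hx0.
  rewrite <- E. apply le_colon, H.
Qed.

Lemma mul_cancel_eq x a b : principal L x -> x <> zero L -> a ⋅ x = b ⋅ x -> a = b.
Proof.
  intros Hx Hx0 H. apply le_antisym; apply (mul_cancel_le x); auto; rewrite H; apply le_refl.
Qed.

Lemma principal_of_mul_eq x a b : principal L x -> x <> zero L -> x = a ⋅ b -> principal L a.
Proof.
  intros Hx Hx0 ->.
  assert (Hb : forall u v, u ⋅ b ⊑ v ⋅ b -> u ⊑ v).
  { intros u v H. apply (mul_cancel_le (a ⋅ b)); auto.
    rewrite (mulC _ a b), !mulA. apply mul_mono_l, H. }
  assert (Hcol : forall y, (y ⋅ b) ÷ (a ⋅ b) ⊑ y ÷ a).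
  { intros y. apply le_colon, Hb. rewrite <- mulA. apply colon_mul_le. }
  intros y z. split; apply le_antisym.
  - apply Hb. apply le_trans with ((y ⋅ b) ⊓ (z ⋅ (a ⋅ b))).
    { apply meet_glb; [apply mul_mono_l, meet_l | rewrite mulA; apply mul_mono_l, meet_r]. }
    destruct (Hx (y ⋅ b) z) as [-> _]. rewrite mulA.
    apply mul_mono_l, mul_mono_l, meet_mono; [apply Hcol | apply le_refl].
  - apply meet_glb.
    + apply le_trans with ((y ÷ a) ⋅ a); [apply mul_mono_l, meet_l | apply colon_mul_le].
    + apply mul_mono_l, meet_r.
  - apply join_lub; [apply le_colon, join_l | apply colon_mono, join_r].
  - assert (Ht : ((y ⋅ a ⊔ z) ÷ a) ⋅ (a ⋅ b) ⊑ y ⋅ (a ⋅ b) ⊔ z ⋅ b).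
    { rewrite !mulA, <- mul_join_l. apply mul_mono_l, colon_mul_le. }
    apply le_trans with ((y ⋅ (a ⋅ b) ⊔ z ⋅ b) ÷ (a ⋅ b)); [apply le_colon, Ht |].
    rewrite colon_mul_join by exact Hx. apply join_mono; [apply le_refl | apply Hcol].
Qed.

Lemma colon_meet_not_le w s s' : principal L w -> w <> zero L -> principal L s -> principal L s' ->
  w ⊑ s -> s ⊑ s' -> ~ s' ⊑ s -> ~ (w ÷ s) ⊓ s' ⊑ w.
Proof.
  intros Hw Hw0 Hs Hs' Hws Hss' Hstrict Hle.
  assert (Ew : (w ÷ s) ⋅ s = w) by (apply mul_colon_principal; assumption).
  assert (Es : (s ÷ s') ⋅ s' = s) by (apply mul_colon_principal; assumption).
  assert (Ht : principal L (w ÷ s)) by (apply (principal_of_mul_eq w _ s); auto).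
  assert (Ht0 : w ÷ s <> zero L) by (rewrite <- Ew in Hw0; exact (nonzero_factor_l _ _ Hw0)).
  assert (Hs'0 : s' <> zero L) by (apply (neq_zero_le w); [apply le_trans with s |]; assumption).
  assert (Hcol : w ÷ s ÷ s' ⊑ (w ÷ s) ⋅ (s ÷ s')).
  { apply (mul_cancel_le s'); auto.
    rewrite <- meet_principal, <- mulA, Es, Ew by exact Hs'. exact Hle. }
  assert (Hunit : one ⊑ s ÷ s').
  { apply (mul_cancel_le (w ÷ s)); auto. rewrite mul1l, mulC.
    apply le_trans with (w ÷ s ÷ s'); [apply le_colon_self | exact Hcol]. }
  apply Hstrict. rewrite <- Es, <- (mul1l s') at 1. apply mul_mono_l, Hunit.
Qed.

End Domain.

Lemma principally_generated_eq (Hpg : principally_generated L) x :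
  x = bigjoin (principal_below x).
Proof.
  destruct (Hpg x) as [S [HS Ex]]. apply le_antisym.
  - rewrite Ex at 1. apply bigjoin_least. intros p Hp. apply bigjoin_ub. split; [apply HS, Hp |].
    rewrite Ex. apply bigjoin_ub, Hp.
  - apply bigjoin_least. intros p [_ H]. exact H.
Qed.

Lemma exists_nonzero_principal_below (Hpg : principally_generated L) x :
  x <> zero L -> exists p, nonzero_principal_below x p.
Proof.
  intros Hx. apply NNPP. intros Hn. apply Hx, le_zero. rewrite (principally_generated_eq Hpg x) at 1.
  apply bigjoin_least. intros p [Hp Hpx]. destruct (classic (p = zero L)) as [-> | Hp0]; [apply le_refl|].
  exfalso. apply Hn. exists p. exact (conj Hp (conj Hp0 Hpx)).
Qed.

End Principal.

Section Compactness.
Context {L : MultLattice}.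
Implicit Types c p : L.

Lemma compact_le_directed c (D : L -> Prop) :
  compact L c -> (exists d, D d) ->
  (forall d1 d2, D d1 -> D d2 -> exists d, D d /\ d1 ⊑ d /\ d2 ⊑ d) ->
  c ⊑ bigjoin D -> exists d, D d /\ c ⊑ d.
Proof.
  intros Hc [d0 Hd0] Hdir HcD.
  assert (Hbound : forall T, (forall t, In t T -> D t) -> exists d, D d /\ list_join T ⊑ d).
  { induction T as [| t T IH]; intros HT.
    - exists d0. split; [exact Hd0 | apply bigjoin_least; intros _ []].
    - destruct IH as [d [Hd HTd]]; [intros x Hx; apply HT; right; exact Hx |].
      destruct (Hdir t d) as [e [He [Hte Hde]]]; [apply HT; left; reflexivity | exact Hd |].
      exists e. split; [exact He |]. apply bigjoin_least. intros x [<- | Hx]; [exact Hte |].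
      apply le_trans with (list_join T); [apply bigjoin_ub, Hx |].
      apply le_trans with d; assumption. }
  destruct (Hc D HcD) as [T [HT HcT]]. destruct (Hbound T HT) as [d [Hd HTd]].
  exists d. split; [exact Hd | apply le_trans with (list_join T); assumption].
Qed.

Lemma compact_le_chain c (s : nat -> L) :
  compact L c -> (forall n, s n ⊑ s (S n)) -> c ⊑ seq_join s -> exists n, c ⊑ s n.
Proof.
  intros Hc Hs H. destruct (compact_le_directed c (fun z => exists n, z = s n) Hc) with (3 := H) as [d [[n ->] Hn]].
  - exists (s 0), 0. reflexivity.
  - intros d1 d2 [n1 ->] [n2 ->]. exists (s (max n1 n2)).
    split; [eexists; reflexivity | split; apply chain_le; auto; lia].
  - exists n. exact Hn.
Qed.

Lemma principal_compact (HC : is_C_lattice L) (Hdom : is_domain L) p :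
  principal L p -> compact L p.
Proof.
  intros Hp. destruct (classic (p = zero L)) as [-> | Hp0].
  { intros S _. exists nil. split; [intros t [] | apply zero_le]. }
  destruct HC as [Hone [_ Hgen]]. intros S HS.
  set (D := fun d => exists T, (forall t, In t T -> S t) /\ d = list_join T ÷ p).
  assert (HD : one ⊑ bigjoin D).
  { apply (mul_cancel_le Hdom p); auto. rewrite mul1l.
    destruct (Hgen p) as [K [HK Ep]]. rewrite Ep at 1. apply bigjoin_least. intros k Hk.
    assert (Hkp : k ⊑ p) by (rewrite Ep; apply bigjoin_ub, Hk).
    destruct (HK k Hk S (le_trans _ _ _ _ Hkp HS)) as [T [HT HkT]].
    apply le_trans with (list_join T ⊓ p); [apply meet_glb; assumption |].
    rewrite meet_principal by exact Hp. apply mul_mono_l, bigjoin_ub. exists T. split; [exact HT | reflexivity]. }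
  destruct (compact_le_directed one D Hone) with (3 := HD) as [d [[T [HT ->]] Hd]].
  - exists (list_join nil ÷ p), nil. split; [intros t [] | reflexivity].
  - intros d1 d2 [T1 [HT1 ->]] [T2 [HT2 ->]]. exists (list_join (T1 ++ T2) ÷ p).
    split; [exists (T1 ++ T2); split; [intros t Ht; apply in_app_or in Ht; destruct Ht; auto | reflexivity] |].
    split; apply colon_mono, bigjoin_least; intros t Ht; apply bigjoin_ub, in_or_app; auto.
  - exists T. split; [exact HT |]. apply le_trans with ((list_join T ÷ p) ⋅ p); [| apply colon_mul_le].
    rewrite <- (mul1l p) at 1. apply mul_mono_l, Hd.
Qed.

End Compactness.

Section Sharp.
Context {L : MultLattice} (Hdom : is_domain L) (Hsh : sharp L).
Implicit Types a b c p q u v x : L.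

Lemma least_principal_above a x : principal L x -> x <> zero L -> x ⊑ a ->
  exists b, principal L b /\ b <> zero L /\ a ⊑ b /\ forall z, principal L z -> a ⊑ z -> b ⊑ z.
Proof.
  intros Hx Hx0 Hxa.
  destruct (Hsh a (x ÷ a) x) as [b [b' [Hab [Hb' Ex]]]]; [rewrite mulC; apply colon_mul_le |].
  assert (Hbb' : b ⋅ b' <> zero L) by (rewrite <- Ex; exact Hx0).
  assert (Hb'0 : b' <> zero L) by exact (nonzero_factor_r _ _ Hbb').
  exists b. split; [|split; [|split]].
  - exact (principal_of_mul_eq Hdom x b b' Hx Hx0 Ex).
  - exact (nonzero_factor_l _ _ Hbb').
  - exact Hab.
  - intros z Hz Haz.
    assert (Hb'p : principal L b') by (apply (principal_of_mul_eq Hdom x b' b); auto; rewrite mulC; exact Ex).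
    apply (mul_cancel_le Hdom b'); auto. rewrite <- Ex.
    rewrite <- (mul_colon_principal z x) by (auto; apply le_trans with a; assumption).
    rewrite (mulC _ z b'). apply mul_mono_l. apply le_trans with (x ÷ a); [apply colon_anti, Haz | exact Hb'].
Qed.

Lemma least_principal_factor a x : principal L x -> x <> zero L -> x ⊑ a ->
  exists b, principal L b /\ b <> zero L /\ (a ÷ b) ⋅ b = a /\ not_in_proper_principal (a ÷ b).
Proof.
  intros Hx Hx0 Hxa.
  destruct (least_principal_above a x) as [b [Hb [Hb0 [Hab Hleast]]]]; auto.
  assert (Ea : (a ÷ b) ⋅ b = a) by (apply mul_colon_principal; assumption).
  exists b. split; [exact Hb | split; [exact Hb0 | split; [exact Ea |]]].
  intros z Hz Hcz. apply le_antisym; [apply one_top |].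
  apply (mul_cancel_le Hdom b); auto. rewrite mul1l, mulC.
  apply Hleast; [apply principal_mul; assumption |].
  rewrite <- Ea at 1. rewrite (mulC _ b z). apply mul_mono_l, Hcz.
Qed.

Lemma colon_le_of_cover c u v : not_in_proper_principal c -> principal L u -> u <> zero L ->
  c ⊑ v ⊔ u -> u ÷ v ⊑ u.
Proof.
  intros Hc Hu Hu0 Hcvu.
  destruct (Hsh (u ÷ v) v u (colon_mul_le v u)) as [b1 [b2 [H1 [H2 Eu]]]].
  assert (Hb2 : b2 = one).
  { apply Hc.
    - apply (principal_of_mul_eq Hdom u b2 b1); auto. rewrite mulC. exact Eu.
    - apply le_trans with (v ⊔ u); [exact Hcvu |]. apply join_lub; [exact H2 |].
      rewrite Eu at 1. apply mul_le_r. }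
  apply le_trans with b1; [exact H1 |]. rewrite Eu, Hb2, mul1. apply le_refl.
Qed.

Lemma join_principal_eq_one p q : principal L p -> principal L q -> p <> zero L -> q <> zero L ->
  not_in_proper_principal (p ⊔ q) -> p ⊔ q = one.
Proof.
  intros Hp Hq Hp0 Hq0 Hc.
  assert (Hqp : q ÷ p ⊑ q) by (apply (colon_le_of_cover (p ⊔ q)); auto; apply le_refl).
  assert (Hpq : p ÷ q ⊑ p) by (apply (colon_le_of_cover (p ⊔ q)); auto; rewrite join_comm; apply le_refl).
  destruct (Hsh (p ⊔ q) (p ⊔ q) (p ⋅ p ⊔ q)) as [B [C [HB [HC EA]]]].
  { rewrite mul_join_l, mul_join_r. apply join_lub.
    - apply join_mono; [apply le_refl | apply mul_le_r].
    - apply le_trans with q; [apply mul_le_l | apply join_r]. }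
  assert (HAp : (p ⋅ p ⊔ q) ÷ p ⊑ p ⊔ q) by (rewrite colon_mul_join by exact Hp; apply join_mono; [apply le_refl | exact Hqp]).
  assert (HBc : B ⊑ p ⊔ q).
  { apply le_trans with ((p ⋅ p ⊔ q) ÷ p); [| exact HAp]. apply le_colon. rewrite EA.
    apply mul_mono_r. apply le_trans with (p ⊔ q); [apply join_l | exact HC]. }
  assert (HCc : C ⊑ p ⊔ q).
  { apply le_trans with ((p ⋅ p ⊔ q) ÷ p); [| exact HAp]. apply le_colon. rewrite EA, (mulC _ B C).
    apply mul_mono_r. apply le_trans with (p ⊔ q); [apply join_l | exact HB]. }
  assert (Hq_le : q ⊑ q ⋅ q ⊔ p ⋅ (p ⊔ q)).
  { apply le_trans with (p ⋅ p ⊔ q); [apply join_r |]. rewrite EA.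
    apply le_trans with ((p ⊔ q) ⋅ (p ⊔ q)); [apply mul_mono; assumption |].
    rewrite mul_join_l. apply join_lub; [apply join_r |].
    rewrite mul_join_r. apply join_lub; [| apply join_l].
    apply le_trans with (p ⋅ (p ⊔ q)); [rewrite mulC; apply mul_mono_r, join_r | apply join_r]. }
  apply le_antisym; [apply one_top |].
  apply le_trans with ((q ⋅ q ⊔ p ⋅ (p ⊔ q)) ÷ q); [apply le_colon; rewrite mul1l; exact Hq_le |].
  rewrite colon_mul_join by exact Hq. apply join_lub; [apply join_r |].
  apply le_trans with (p ÷ q); [apply colon_mono, mul_le_l |].
  apply le_trans with p; [exact Hpq | apply join_l].
Qed.

Lemma principal_join p q : principal L p -> principal L q -> principal L (p ⊔ q).
Proof.
  intros Hp Hq.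
  destruct (classic (p = zero L)) as [-> | Hp0]; [rewrite join_zero_l; exact Hq |].
  destruct (classic (q = zero L)) as [-> | Hq0]; [rewrite join_zero_r; exact Hp |].
  destruct (least_principal_factor (p ⊔ q) p Hp Hp0 (join_l p q)) as [b [Hb [Hb0 [Eb Hc]]]].
  assert (Hpb : p ⊑ b) by (apply le_trans with (p ⊔ q); [apply join_l | rewrite <- Eb; apply mul_le_r]).
  assert (Hqb : q ⊑ b) by (apply le_trans with (p ⊔ q); [apply join_r | rewrite <- Eb; apply mul_le_r]).
  assert (Ep : (p ÷ b) ⋅ b = p) by (apply mul_colon_principal; assumption).
  assert (Eq : (q ÷ b) ⋅ b = q) by (apply mul_colon_principal; assumption).
  assert (Ec : (p ⊔ q) ÷ b = p ÷ b ⊔ q ÷ b).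
  { apply (mul_cancel_eq Hdom b); auto. rewrite Eb, mul_join_l, Ep, Eq. reflexivity. }
  assert (Hone : (p ⊔ q) ÷ b = one).
  { rewrite Ec in *. apply join_principal_eq_one; auto.
    - apply (principal_of_mul_eq Hdom p _ b); auto.
    - apply (principal_of_mul_eq Hdom q _ b); auto.
    - rewrite <- Ep in Hp0. exact (nonzero_factor_l _ _ Hp0).
    - rewrite <- Eq in Hq0. exact (nonzero_factor_l _ _ Hq0). }
  rewrite <- Eb, Hone, mul1l. exact Hb.
Qed.

Lemma principal_below_join m p q : principal_below m p -> principal_below m q -> principal_below m (p ⊔ q).
Proof. intros [Hp Hpm] [Hq Hqm]. split; [apply principal_join | apply join_lub]; assumption. Qed.

End Sharp.

Section Countable.
Context {L : MultLattice} (Hcount : countable_lattice L).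
Implicit Types c : L.

Lemma countable_enum (P : L -> Prop) x0 : P x0 ->
  exists e : nat -> L, (forall n, P (e n)) /\ forall x, P x -> exists n, e n = x.
Proof.
  destruct Hcount as [f Hf]. intros Hx0.
  destruct (choice (fun n x => P x /\ forall y, P y -> f y = n -> x = y)) as [e He].
  { intros n. destruct (classic (exists y, P y /\ f y = n)) as [[y [Hy Hfy]] | Hn].
    - exists y. split; [exact Hy |]. intros z _ Hfz. apply Hf. congruence.
    - exists x0. split; [exact Hx0 |]. intros y Hy Hfy. exfalso. apply Hn. eauto. }
  exists e. split; [intros n; apply He |].
  intros x Hx. exists (f x). apply (He (f x)); auto.
Qed.

Lemma countable_no_stream_injection (E : (nat -> bool) -> L) :
  (forall s t, E s = E t -> s = t) -> False.
Proof.
  destruct Hcount as [f Hf]. intros HE.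
  destruct (choice (fun n (s : nat -> bool) => forall t, f (E t) = n -> s = t)) as [g Hg].
  { intros n. destruct (classic (exists t, f (E t) = n)) as [[t Ht] | Hn].
    - exists t. intros t' Ht'. apply HE, Hf. congruence.
    - exists (fun _ => true). intros t Ht. exfalso. eauto. }
  set (d := fun n => negb (g n n)).
  assert (Hd : g (f (E d)) = d) by (apply Hg; reflexivity).
  assert (Hdiag : d (f (E d)) = negb (d (f (E d)))).
  { change (negb (g (f (E d)) (f (E d))) = negb (d (f (E d)))). rewrite Hd. reflexivity. }
  destruct (d (f (E d))); discriminate Hdiag.
Qed.

Lemma exists_maximal_above c : compact L one -> c <> one -> exists m : L, c ⊑ m /\ maximal m.
Proof.
  intros Hone Hc.
  destruct (countable_enum (fun _ => True) one I) as [g [_ Hg]].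
  set (cs := fix cs n := match n with
                         | O => c
                         | S n => if excluded_middle_informative (cs n ⊔ g n = one)
                                  then cs n else cs n ⊔ g n
                         end).
  assert (Hne : forall n, cs n <> one).
  { induction n as [| n IH]; simpl; [exact Hc | destruct excluded_middle_informative; assumption]. }
  assert (Hstep : forall n, cs n ⊑ cs (S n)).
  { intros n. simpl. destruct excluded_middle_informative; [apply le_refl | apply join_l]. }
  exists (seq_join cs). split; [| split].
  - apply bigjoin_ub. exists 0. reflexivity.
  - intros Em. destruct (compact_le_chain one cs Hone Hstep) as [n Hn]; [rewrite Em; apply le_refl |].
    apply (Hne n), le_antisym; [apply one_top | exact Hn].
  - intros e He He1. apply le_antisym; [| exact He].
    destruct (Hg e I) as [n <-].
    apply le_trans with (cs (S n)); [| apply bigjoin_ub; exists (S n); reflexivity].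
    simpl. destruct excluded_middle_informative as [E | _]; [exfalso | apply join_r].
    apply He1. rewrite <- E. symmetry. apply join_eq_r.
    apply le_trans with (seq_join cs); [apply bigjoin_ub; exists n; reflexivity | exact He].
Qed.

End Countable.

Section ExhaustingChain.
Context {L : MultLattice} (Hdom : is_domain L) (Hsh : sharp L) (Hpg : principally_generated L).

Lemma exhausting_principal_chain (m w : L) : countable_lattice L -> ~ principal L m ->
  principal L w -> w ⊑ m ->
  exists s : nat -> L, s 0 = w /\ (forall n, principal L (s n)) /\ (forall n, s n ⊑ s (S n)) /\
    (forall n, ~ s (S n) ⊑ s n) /\ m ⊑ seq_join s.
Proof.
  intros Hcount Hm Hw Hwm.
  destruct (countable_enum Hcount (principal_below m) (zero L) (principal_below_zero m)) as [e [He He_onto]].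
  destruct (choice (fun z z' => principal_below m z -> principal_below m z' /\ z ⊑ z' /\ ~ z' ⊑ z))
    as [next Hnext].
  { intros z. destruct (classic (principal_below m z)) as [Hz | Hz]; [| exists z; tauto].
    assert (Hq : exists q, principal_below m q /\ ~ q ⊑ z).
    { apply NNPP. intros Hn. apply Hm. replace m with z; [apply Hz |].
      apply le_antisym; [apply Hz |]. rewrite (principally_generated_eq Hpg m).
      apply bigjoin_least. intros q Hq. apply NNPP. intros Hqz. apply Hn. exists q. split; assumption. }
    destruct Hq as [q [Hq Hqz]]. exists (z ⊔ q). intros _. split; [| split].
    - apply principal_below_join; assumption.
    - apply join_l.
    - intros H. apply Hqz. apply le_trans with (z ⊔ q); [apply join_r | exact H]. }
  set (s := fix s n := match n with O => w | S n => next (s n ⊔ e n) end).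
  assert (Hs : forall n, principal_below m (s n)).
  { induction n as [| n IH]; [split; assumption |].
    apply (Hnext (s n ⊔ e n)), principal_below_join; auto. }
  assert (Hs_next : forall n, s n ⊔ e n ⊑ s (S n)).
  { intros n. apply (Hnext (s n ⊔ e n)), principal_below_join; auto. }
  exists s. split; [reflexivity | split; [| split; [| split]]].
  - intros n. apply Hs.
  - intros n. apply le_trans with (s n ⊔ e n); [apply join_l | apply Hs_next].
  - intros n H. apply (Hnext (s n ⊔ e n)); [apply principal_below_join; auto |].
    apply le_trans with (s n); [exact H | apply join_l].
  - rewrite (principally_generated_eq Hpg m) at 1. apply bigjoin_least. intros q Hq.
    destruct (He_onto q Hq) as [n <-].
    apply le_trans with (s (S n)); [| apply bigjoin_ub; exists (S n); reflexivity].
    apply le_trans with (s n ⊔ e n); [apply join_r | apply Hs_next].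
Qed.

End ExhaustingChain.

Section MaximalCase.
Context {L : MultLattice} (Hdom : is_domain L) (HC : is_C_lattice L) (Hsh : sharp L).
Variables (m w : L) (s : nat -> L).
Hypothesis Hm : maximal m.
Hypothesis Hw : principal L w.
Hypothesis Hwmm : ~ w ⊑ m ⋅ m.
Hypothesis Hs0 : s 0 = w.
Hypothesis Hs_principal : forall n, principal L (s n).
Hypothesis Hs_step : forall n, s n ⊑ s (S n).
Hypothesis Hs_strict : forall n, ~ s (S n) ⊑ s n.
Hypothesis Hs_cover : m ⊑ seq_join s.

Definition wedge (n : nat) : L := (w ÷ s n) ⊓ s (S n).

Lemma w_le_chain n : w ⊑ s n.
Proof. rewrite <- Hs0. apply chain_le; [exact Hs_step | lia]. Qed.

Lemma wedge_mul_le i j : i < j -> wedge i ⋅ wedge j ⊑ w.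
Proof.
  intros Hij. apply le_trans with (s j ⋅ (w ÷ s j)); [apply mul_mono |].
  - apply le_trans with (s (S i)); [apply meet_r | apply chain_le; assumption].
  - apply meet_l.
  - rewrite mulC. apply colon_mul_le.
Qed.

Lemma wedge_not_le n : ~ wedge n ⊑ w.
Proof.
  apply colon_meet_not_le; auto using w_le_chain.
  intros ->. apply Hwmm, zero_le.
Qed.

Lemma wedge_eventually_not_le X Y : X ⋅ Y ⊑ w -> ~ Y ⊑ m ->
  exists N, forall k, N <= k -> ~ wedge k ⊑ X.
Proof.
  intros HXY HYm.
  assert (HYm1 : Y ⊔ m = one).
  { apply NNPP. intros Hne. apply HYm. destruct Hm as [_ Hmax].
    rewrite <- (Hmax (Y ⊔ m)); [apply join_l | apply join_r | exact Hne]. }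
  destruct (compact_le_chain one (fun n => Y ⊔ s n)) as [N HN].
  - exact (proj1 HC).
  - intros n. apply join_mono; [apply le_refl | apply Hs_step].
  - rewrite <- HYm1. apply join_lub.
    + apply le_trans with (Y ⊔ s 0); [apply join_l | apply bigjoin_ub; exists 0; reflexivity].
    + apply le_trans with (seq_join s); [exact Hs_cover |]. apply bigjoin_least. intros z [n ->].
      apply le_trans with (Y ⊔ s n); [apply join_r | apply bigjoin_ub; exists n; reflexivity].
  - exists N. intros k Hk HkX. apply (wedge_not_le k).
    rewrite <- (mul1 _ (wedge k)).
    apply le_trans with (wedge k ⋅ (Y ⊔ s N)); [apply mul_mono_r, HN |].
    rewrite mul_join_r. apply join_lub.
    + apply le_trans with (X ⋅ Y); [apply mul_mono_l, HkX | exact HXY].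
    + apply le_trans with ((w ÷ s k) ⋅ s k); [| apply colon_mul_le].
      apply mul_mono; [apply meet_l | apply chain_le; assumption].
Qed.

Lemma maximal_chain_contradiction : False.
Proof.
  set (B := seq_join (fun n => wedge (2 * n))).
  set (C := seq_join (fun n => wedge (2 * n + 1))).
  assert (HBC : B ⋅ C ⊑ w).
  { apply le_trans with (1 := mul_bigjoin_le _ _). apply bigjoin_least.
    intros z [p [q [[i ->] [[j ->] ->]]]].
    destruct (Compare_dec.lt_dec (2 * i) (2 * j + 1)).
    - apply wedge_mul_le. assumption.
    - rewrite mulC. apply wedge_mul_le. lia. }
  destruct (Hsh B C w HBC) as [B' [C' [HB [HC' Ew]]]].
  destruct (classic (C' ⊑ m)) as [HCm | HCm].
  - assert (HBm : ~ B' ⊑ m) by (intros HBm; apply Hwmm; rewrite Ew; apply mul_mono; assumption).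
    destruct (wedge_eventually_not_le C' B') as [N HN]; [rewrite mulC, <- Ew; apply le_refl | exact HBm |].
    apply (HN (2 * N + 1)); [lia |].
    apply le_trans with C; [apply bigjoin_ub; eexists; reflexivity | exact HC'].
  - destruct (wedge_eventually_not_le B' C') as [N HN]; [rewrite <- Ew; apply le_refl | exact HCm |].
    apply (HN (2 * N)); [lia |].
    apply le_trans with B; [apply bigjoin_ub; eexists; reflexivity | exact HB].
Qed.

End MaximalCase.

Lemma principal_below_maximal_le_square {L : MultLattice} (m w : L) :
  countable_lattice L -> is_C_lattice L -> is_domain L -> principally_generated L -> sharp L ->
  maximal m -> not_in_proper_principal m -> principal L w -> w ⊑ m -> w ⊑ m ⋅ m.
Proof.
  intros Hcount HC Hdom Hpg Hsh Hm Hm_np Hw Hwm. apply NNPP. intros Hwmm.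
  assert (Hm_nprinc : ~ principal L m) by (intros Hmp; apply (proj1 Hm), Hm_np; [exact Hmp | apply le_refl]).
  destruct (exhausting_principal_chain Hdom Hsh Hpg m w Hcount Hm_nprinc Hw Hwm)
    as [s [Hs0 [Hs_principal [Hs_step [Hs_strict Hs_cover]]]]].
  exact (maximal_chain_contradiction Hdom HC Hsh m w s Hm Hw Hwmm Hs0 Hs_principal Hs_step Hs_strict Hs_cover).
Qed.

Lemma principal_below_square_factor {L : MultLattice} (m u : L) :
  is_C_lattice L -> is_domain L -> principally_generated L -> sharp L ->
  m ⊑ m ⋅ m -> nonzero_principal_below m u ->
  exists v v', nonzero_principal_below m v /\ nonzero_principal_below m v' /\ u = v ⋅ v'.
Proof.
  intros HC Hdom Hpg Hsh Hmm [Hu [Hu0 Hum]].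
  set (D := fun d => exists p q, principal_below m p /\ principal_below m q /\ d = p ⋅ q).
  assert (HuD : u ⊑ bigjoin D).
  { apply le_trans with (m ⋅ m); [apply le_trans with m; assumption |].
    rewrite (principally_generated_eq Hpg m) at 1 2. apply mul_bigjoin_le. }
  destruct (compact_le_directed u D) with (4 := HuD) as [d [[p [q [[Hp Hpm] [[Hq Hqm] ->]]]] Hupq]].
  - apply principal_compact; assumption.
  - exists (zero L ⋅ zero L), (zero L), (zero L).
    split; [apply principal_below_zero | split; [apply principal_below_zero | reflexivity]].
  - intros d1 d2 [p1 [q1 [Hp1 [Hq1 ->]]]] [p2 [q2 [Hp2 [Hq2 ->]]]].
    exists ((p1 ⊔ p2) ⋅ (q1 ⊔ q2)). split.
    + exists (p1 ⊔ p2), (q1 ⊔ q2). split; [| split; [| reflexivity]]; apply principal_below_join; assumption.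
    + split; apply mul_mono; [apply join_l | apply join_l | apply join_r | apply join_r].
  - set (r := u ÷ (p ⋅ q)).
    assert (Hpq : principal L (p ⋅ q)) by (apply principal_mul; assumption).
    assert (Eu : u = p ⋅ (q ⋅ r)).
    { rewrite mulA, mulC. symmetry. apply mul_colon_principal; assumption. }
    assert (Hr : principal L r) by (apply (principal_of_mul_eq Hdom u _ (p ⋅ q)); auto; rewrite Eu, mulA, mulC; reflexivity).
    assert (Hpqr0 : p ⋅ (q ⋅ r) <> zero L) by (rewrite <- Eu; exact Hu0).
    exists p, (q ⋅ r). split; [| split; [| exact Eu]].
    + split; [exact Hp | split; [apply (nonzero_factor_l _ _ Hpqr0) | exact Hpm]].
    + split; [apply principal_mul; assumption |].
      split; [apply (nonzero_factor_r _ _ Hpqr0) | apply le_trans with q; [apply mul_le_l | exact Hqm]].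
Qed.

Section SplittingTree.
Context {L : MultLattice} (Hdom : is_domain L).
Variables (m u0 : L) (fac1 fac2 fac3 : L -> L).
Hypothesis Hm1 : m <> one.
Hypothesis Hu0 : nonzero_principal_below m u0.
Hypothesis Hfac : forall u, nonzero_principal_below m u ->
  nonzero_principal_below m (fac1 u) /\ nonzero_principal_below m (fac2 u) /\
  nonzero_principal_below m (fac3 u) /\ u = fac1 u ⋅ fac2 u ⋅ fac3 u.

(* A state (B, u) confines every later lower bound B' u' between B u and B, and the lower
   bound of the [true] child is not below the upper bound of the [false] child, so
   different branches have different limits. *)
Definition tree_step (b : bool) (st : L * L) : L * L :=
  let (B, u) := st in if b then (B, fac1 u) else (B ⋅ fac1 u ⋅ fac2 u, fac3 u).

Fixpoint tree_path (s : nat -> bool) (n : nat) : L * L :=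
  match n with O => (one, u0) | S n => tree_step (s n) (tree_path s n) end.

Definition tree_lower (st : L * L) : L := fst st ⋅ snd st.

Definition tree_limit (s : nat -> bool) : L := seq_join (fun n => tree_lower (tree_path s n)).

Definition tree_inv (st : L * L) : Prop :=
  principal L (fst st) /\ fst st <> zero L /\ nonzero_principal_below m (snd st).

Lemma tree_path_inv s n : tree_inv (tree_path s n).
Proof.
  induction n as [| n [HB [HB0 Hu]]]; [exact (conj principal_one (conj (one_neq_zero Hdom) Hu0)) |].
  simpl. destruct (tree_path s n) as [B u]. simpl in *.
  destruct (Hfac u Hu) as [Hf1 [Hf2 [Hf3 _]]].
  destruct (s n); simpl; [exact (conj HB (conj HB0 Hf1)) |].
  destruct Hf1 as [H1 [H10 _]], Hf2 as [H2 [H20 _]].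
  split; [| split; [| exact Hf3]].
  - repeat apply principal_mul; assumption.
  - repeat apply (mul_neq_zero Hdom); assumption.
Qed.

Lemma tree_lower_step b st : tree_inv st -> tree_lower st ⊑ tree_lower (tree_step b st).
Proof.
  destruct st as [B u]. intros [_ [_ Hu]]. destruct (Hfac u Hu) as [_ [_ [_ Eu]]].
  unfold tree_lower. destruct b; simpl.
  - apply mul_mono_r. rewrite Eu at 1. apply le_trans with (fac1 u ⋅ fac2 u); apply mul_le_l.
  - rewrite Eu at 1. rewrite !mulA. apply le_refl.
Qed.

Lemma tree_fst_step b st : fst (tree_step b st) ⊑ fst st.
Proof.
  destruct st as [B u]. destruct b; simpl; [apply le_refl |].
  apply le_trans with (B ⋅ fac1 u); apply mul_le_l.
Qed.

Lemma tree_limit_le_fst s n : tree_limit s ⊑ fst (tree_path s n).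
Proof.
  apply bigjoin_least. intros z [k ->]. destruct (Compare_dec.le_ge_dec k n) as [Hkn | Hnk].
  - apply le_trans with (tree_lower (tree_path s n)); [| apply mul_le_l].
    apply (chain_le (fun n => tree_lower (tree_path s n))); [| exact Hkn].
    intros j. apply tree_lower_step, tree_path_inv.
  - apply le_trans with (fst (tree_path s k)); [apply mul_le_l |].
    induction Hnk as [| k _ IH]; [apply le_refl |].
    apply le_trans with (fst (tree_path s k)); [apply tree_fst_step | exact IH].
Qed.

Lemma tree_steps_separated st : tree_inv st -> ~ tree_lower (tree_step true st) ⊑ fst (tree_step false st).
Proof.
  destruct st as [B u]. intros [HB [HB0 Hu]] Hle. unfold tree_lower in Hle. simpl in *.
  destruct (Hfac u Hu) as [[H1 [H10 _]] [[_ [_ H2m]] _]].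
  apply Hm1, le_antisym; [apply one_top |]. apply le_trans with (fac2 u); [| exact H2m].
  apply (mul_cancel_le Hdom (B ⋅ fac1 u)).
  - apply principal_mul; assumption.
  - apply (mul_neq_zero Hdom); assumption.
  - rewrite mul1l, (mulC _ (fac2 u)). exact Hle.
Qed.

Lemma tree_path_prefix s t n : (forall k, k < n -> s k = t k) -> tree_path s n = tree_path t n.
Proof.
  induction n as [| n IH]; intros Hst; [reflexivity |].
  simpl. rewrite IH by (intros k Hk; apply Hst; lia). rewrite (Hst n) by lia. reflexivity.
Qed.

Lemma tree_branches_differ s t n : tree_path s n = tree_path t n -> s n = true -> t n = false ->
  tree_limit s <> tree_limit t.
Proof.
  intros Hpath Hs Ht E. apply (tree_steps_separated (tree_path s n)); [apply tree_path_inv |].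
  apply le_trans with (tree_limit s).
  - apply bigjoin_ub. exists (S n). simpl. rewrite Hs. reflexivity.
  - rewrite E. apply le_trans with (fst (tree_path t (S n))); [apply tree_limit_le_fst |].
    simpl. rewrite Ht, <- Hpath. apply le_refl.
Qed.

Lemma tree_limit_injective s t : tree_limit s = tree_limit t -> s = t.
Proof.
  intros E. apply functional_extensionality.
  assert (Hagree : forall n k, k < n -> s k = t k).
  { induction n as [| n IH]; intros k Hk; [lia |].
    destruct (PeanoNat.Nat.eq_dec k n) as [-> | Hkn]; [| apply IH; lia].
    assert (Hpath : tree_path s n = tree_path t n) by (apply tree_path_prefix, IH).
    destruct (s n) eqn:Es, (t n) eqn:Et; try reflexivity; exfalso.
    - exact (tree_branches_differ s t n Hpath Es Et E).
    - exact (tree_branches_differ t s n (eq_sym Hpath) Et Es (eq_sym E)). }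
  intros n. apply (Hagree (S n)). lia.
Qed.

End SplittingTree.

Lemma le_square_trivial {L : MultLattice} (m : L) :
  countable_lattice L -> is_C_lattice L -> is_domain L -> principally_generated L -> sharp L ->
  m ⊑ m ⋅ m -> m = zero L \/ m = one.
Proof.
  intros Hcount HC Hdom Hpg Hsh Hmm. apply NNPP. intros Hm. apply not_or_and in Hm as [Hm0 Hm1].
  destruct (exists_nonzero_principal_below Hpg m Hm0) as [u0 Hu0].
  destruct (choice (fun u (v : L * L * L) => nonzero_principal_below m u ->
      nonzero_principal_below m (fst (fst v)) /\ nonzero_principal_below m (snd (fst v)) /\
      nonzero_principal_below m (snd v) /\ u = fst (fst v) ⋅ snd (fst v) ⋅ snd v)) as [fac Hfac].
  { intros u. destruct (classic (nonzero_principal_below m u)) as [Hu | Hu]; [| exists (u, u, u); tauto].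
    destruct (principal_below_square_factor m u HC Hdom Hpg Hsh Hmm Hu) as [v1 [r [Hv1 [Hr Eu]]]].
    destruct (principal_below_square_factor m r HC Hdom Hpg Hsh Hmm Hr) as [v2 [v3 [Hv2 [Hv3 Er]]]].
    exists (v1, v2, v3). intros _. simpl. rewrite Eu, Er, mulA. tauto. }
  apply (countable_no_stream_injection Hcount
           (tree_limit u0 (fun u => fst (fst (fac u))) (fun u => snd (fst (fac u))) (fun u => snd (fac u)))).
  exact (tree_limit_injective Hdom m u0 _ _ _ Hm1 Hu0 Hfac).
Qed.

Theorem corollary3p15 (L : MultLattice) :
  countable_lattice L -> is_C_lattice L -> is_domain L ->
  principally_generated L -> sharp L -> dedekind_lattice L.
Proof.
  intros Hcount HC Hdom Hpg Hsh x. apply NNPP. intros Hx.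
  assert (Hx0 : x <> zero L) by (intros ->; apply Hx, principal_zero).
  destruct (exists_nonzero_principal_below Hpg x Hx0) as [p [Hp [Hp0 Hpx]]].
  destruct (least_principal_factor Hdom Hsh x p Hp Hp0 Hpx) as [b [Hb [_ [Ex Hc]]]].
  assert (Hc1 : x ÷ b <> one) by (intros E; apply Hx; rewrite <- Ex, E, mul1l; exact Hb).
  assert (Hc0 : x ÷ b <> zero L) by (rewrite <- Ex in Hx0; exact (nonzero_factor_l _ _ Hx0)).
  destruct (exists_maximal_above Hcount (x ÷ b) (proj1 HC) Hc1) as [m [Hcm Hm]].
  assert (Hm_np : not_in_proper_principal m) by (intros z Hz Hmz; apply Hc; [exact Hz | apply le_trans with m; assumption]).
  assert (Hmm : m ⊑ m ⋅ m).
  { rewrite (principally_generated_eq Hpg m) at 1. apply bigjoin_least. intros w [Hw Hwm].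
    apply principal_below_maximal_le_square; assumption. }
  destruct (le_square_trivial m Hcount HC Hdom Hpg Hsh Hmm) as [-> | Hm1].
  - apply Hc0, le_zero, Hcm.
  - apply (proj1 Hm), Hm1.
Qed.
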